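(* Let $m\le k\le n$ be positive integers and $\mathbf a_1,\dots,\mathbf a_n\in\mathbb R^m$. Let $w^*=\max\{[\det(\sum_{i\in S}\mathbf a_i\mathbf a_i^\top)]^{1/m}: S\subseteq[n],\ |S|=k\}$, and let $(\hat{\mathbf x},\hat w)$ be an optimal solution of the convex relaxation $$\hat w=\max_{\mathbf x,w}\Big\{w:\ w\le \Big[\det\Big(\sum_{i\in[n]}x_i\mathbf a_i\mathbf a_i^\top\Big)\Big]^{1/m},\ \sum_{i\in[n]}x_i=k,\ \mathbf x\in[0,1]^n\Big\}.$$ Let $\alpha\in(0,1]$ and let $\mu$ be a probability distribution on the subsets of $[n]$ of size $k$ which is $m$-wise $\alpha$-positively correlated with respect to $\hat{\mathbf x}$, i.e. for a random set $\mathcal S\sim\mu$ and every $T\subseteq[n]$ with $|T|=m$ we have $\Pr[T\subseteq\mathcal S]\ge \alpha^m\prod_{i\in T}\hat x_i$. Then $$\Big\{\mathbb E\Big[\det\Big(\sum_{i\in\mathcal S}\mathbf a_i\mathbf a_i^\top\Big)\Big]\Big\}^{1/m}\ge \alpha\, w^*.$$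
   Context: $[n]=\{1,\dots,n\}$. The expectation is with respect to $\mathcal S\sim\mu$. *)

From HB Require Import structures.
From mathcomp Require Import all_boot all_order all_algebra.
From mathcomp Require Import reals exp.
Set Implicit Arguments. Unset Strict Implicit. Unset Printing Implicit Defensive.
Import Order.TTheory GRing.Theory Num.Theory.
Local Open Scope ring_scope.

Definition gram (R : realType) (n m : nat) (a : 'I_n -> 'cV[R]_m)
    (x : 'I_n -> R) : 'M[R]_m :=
  \sum_(i < n) x i *: (a i *m (a i)^T).

Definition gramS (R : realType) (n m : nat) (a : 'I_n -> 'cV[R]_m)
    (S : {set 'I_n}) : 'M[R]_m :=
  \sum_(i in S) a i *m (a i)^T.

Definition detroot (R : realType) (m : nat) (M : 'M[R]_m) : R :=
  powR (\det M) (m%:R^-1).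

(* w^* = max over |S| = k of det(\sum_{i in S} a_i a_i^T)^{1/m}.
   (The values are >= 0, so 0 is a neutral start for the max.) *)
Definition wstar (R : realType) (n m k : nat) (a : 'I_n -> 'cV[R]_m) : R :=
  \big[Num.max/0]_(S : {set 'I_n} | #|S| == k) detroot (gramS a S).

Definition relax_feasible (R : realType) (n m k : nat) (a : 'I_n -> 'cV[R]_m)
    (x : 'I_n -> R) (w : R) : Prop :=
  w <= detroot (gram a x) /\ \sum_(i < n) x i = k%:R /\
  (forall i, 0 <= x i <= 1).

Definition relax_optimal (R : realType) (n m k : nat) (a : 'I_n -> 'cV[R]_m)
    (x : 'I_n -> R) (w : R) : Prop :=
  relax_feasible k a x w /\
  forall x' w', relax_feasible k a x' w' -> w' <= w.

Definition k_subset_distribution (R : realType) (n k : nat)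
    (mu : {set 'I_n} -> R) : Prop :=
  (forall S : {set 'I_n}, 0 <= mu S) /\ \sum_(S : {set 'I_n}) mu S = 1 /\
  (forall S : {set 'I_n}, #|S| != k -> mu S = 0).

Definition prob_contains (R : realType) (n : nat) (mu : {set 'I_n} -> R)
    (T : {set 'I_n}) : R :=
  \sum_(S : {set 'I_n} | T \subset S) mu S.

Definition pos_correlated (R : realType) (n m : nat) (alpha : R)
    (x : 'I_n -> R) (mu : {set 'I_n} -> R) : Prop :=
  forall T : {set 'I_n}, #|T| = m ->
    alpha ^+ m * \prod_(i in T) x i <= prob_contains mu T.

Definition exp_det (R : realType) (n m : nat) (a : 'I_n -> 'cV[R]_m)
    (mu : {set 'I_n} -> R) : R :=
  \sum_(S : {set 'I_n}) mu S * \det (gramS a S).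

From HB Require Import structures.
From mathcomp Require Import all_boot all_order all_algebra.
From mathcomp Require Import reals exp.
From mathcomp Require Import perm.
Set Implicit Arguments. Unset Strict Implicit. Unset Printing Implicit Defensive.
Import Order.TTheory GRing.Theory Num.Theory.
Local Open Scope ring_scope.

(* By the Cauchy-Binet formula, det(sum_i x_i a_i a_i^T) is the polynomial
   sum_{|T| = m} (prod_{i in T} x_i) det(sum_{i in T} a_i a_i^T), whose
   coefficients are nonnegative.  Taking expectations over S ~ mu turns each
   monomial into Pr[T \subseteq S] >= alpha^m prod_{i in T} xhat_i, so
   E[det] >= alpha^m det(sum_i xhat_i a_i a_i^T) >= (alpha what)^m, and
   what >= w^* because every k-subset yields a feasible point of the
   relaxation. *)

Definition indicator {R : pzSemiRingType} {T : finType} (S : {set T}) (i : T) : R :=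
  (i \in S)%:R.

Section CauchyBinet.
Variables (R : realType) (n m : nat) (a : 'I_n -> 'cV[R]_m).

Lemma gram_indicator S : gram a (indicator S) = gramS a S.
Proof.
rewrite /gram /gramS [RHS]big_mkcond /=; apply: eq_bigr => i _.
by rewrite /indicator; case: (i \in S); rewrite ?scale1r ?scale0r.
Qed.

Lemma prod_indicator (T S : {set 'I_n}) :
  \prod_(j in T) (indicator S j : R) = (T \subset S)%:R.
Proof.
case: (boolP (T \subset S)) => [sTS | /subsetPn[j jT jNS]].
  by apply: big1 => j jT; rewrite /indicator (subsetP sTS j jT).
by rewrite (bigD1 j) //= /indicator (negbTE jNS) mul0r.
Qed.

Lemma det_gramS_ge0 (T : {set 'I_n}) : #|T| = m -> 0 <= \det (gramS a T).
Proof.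
move=> cardT; subst m.
pose B := \matrix_(r < #|T|, j < #|T|) a (enum_val j) r 0.
have -> : gramS a T = B *m B^T.
  apply/matrixP => r s; rewrite /gramS big_enum_val summxE !mxE.
  by apply: eq_bigr => j _; rewrite !mxE big_ord1 !mxE.
by rewrite det_mulmx det_tr -expr2 sqr_ge0.
Qed.

Lemma gramE x i j : gram a x i j = \sum_k x k * (a k i 0 * a k j 0).
Proof. by rewrite /gram summxE; apply: eq_bigr => k _; rewrite !mxE big_ord1 !mxE. Qed.

Let maps := {ffun 'I_m -> 'I_n}.

Let image_of (f : maps) : {set 'I_n} := f @: [set: 'I_m].

Let map_coef (f : maps) : R :=
  (\prod_i a (f i) i 0) * \det (\matrix_(i, j) a (f i) j 0).

Let subset_coef (T : {set 'I_n}) : R := \sum_(f | image_of f == T) map_coef f.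

Lemma det_gram_maps x :
  \det (gram a x) = \sum_(f : maps) (\prod_i x (f i)) * map_coef f.
Proof.
rewrite /determinant.
transitivity (\sum_(s : 'S_m) \sum_(f : maps)
   (-1) ^+ s * \prod_i (x (f i) * (a (f i) i 0 * a (f i) (s i) 0))).
  apply: eq_bigr => s _; rewrite -mulr_sumr; congr (_ * _).
  under eq_bigr => i _ do rewrite gramE.
  exact: (bigA_distr_bigA (fun i k => x k * (a k i 0 * a k (s i) 0))).
rewrite exchange_big /=; apply: eq_bigr => f _.
rewrite /map_coef /determinant !mulr_sumr; apply: eq_bigr => s _.
rewrite !big_split /=.
under [X in _ = _ * (_ * (_ * X))]eq_bigr => i _ do rewrite mxE.
move: ((-1) ^+ s) (\prod_i x (f i)) (\prod_i a (f i) i 0)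
      (\prod_i a (f i) (s i) 0) => p q r t.
by rewrite [LHS]mulrCA; congr (_ * _); rewrite mulrCA.
Qed.

(* A non-injective f repeats a row of the matrix in [map_coef f]. *)
Lemma map_coef_eq0 f : (#|image_of f| < m)%N -> map_coef f = 0.
Proof.
move=> small_image.
case: (pickP [pred p : 'I_m * 'I_m | (p.1 != p.2) && (f p.1 == f p.2)])
  => [[i1 i2] /andP[ne /eqP e] | no_collision].
  by rewrite /map_coef (@determinant_alternate _ _ _ i1 i2) ?mulr0 // => j; rewrite !mxE e.
have injf : injective f.
  move=> i1 i2 e; move: (no_collision (i1, i2)) => /= /negbT.
  by rewrite e eqxx andbT negbK => /eqP.
by move: small_image; rewrite /image_of card_imset // cardsT card_ord ltnn.
Qed.

Lemma det_gram_subsets x : \det (gram a x) =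
  \sum_(T : {set 'I_n} | #|T| == m) (\prod_(j in T) x j) * subset_coef T.
Proof.
rewrite det_gram_maps (partition_big image_of predT) //=.
rewrite (bigID (fun T : {set 'I_n} => #|T| == m)) /= [X in _ + X]big1 ?addr0.
  apply: eq_bigr => T /eqP cardT; rewrite /subset_coef mulr_sumr.
  apply: eq_bigr => f /eqP imf; congr (_ * _); rewrite -imf /image_of big_imset /=.
    by apply: eq_bigl => i; rewrite in_setT.
  by apply/imset_injP; rewrite -/(image_of f) imf cardT cardsT card_ord.
move=> T cardT; apply: big1 => f /eqP imf.
rewrite map_coef_eq0 ?mulr0 // ltn_neqAle imf cardT /=.
by rewrite -imf /image_of (leq_trans (leq_imset_card _ _)) // cardsT card_ord.
Qed.

(* Evaluate the expansion at the indicator of T: only the monomial of T survives. *)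
Lemma subset_coefE (T : {set 'I_n}) : #|T| = m -> subset_coef T = \det (gramS a T).
Proof.
move=> cardT; rewrite -gram_indicator det_gram_subsets (bigD1 T) ?cardT //=.
rewrite prod_indicator subxx mul1r big1 ?addr0 // => T' /andP[/eqP cardT' neT'].
rewrite prod_indicator; case: (boolP (T' \subset T)) => [sT'T | _]; last by rewrite mul0r.
by move: neT'; rewrite eqEcard sT'T cardT cardT' leqnn.
Qed.

Lemma cauchy_binet_gram x : \det (gram a x) =
  \sum_(T : {set 'I_n} | #|T| == m) (\prod_(j in T) x j) * \det (gramS a T).
Proof.
rewrite det_gram_subsets; apply: eq_bigr => T /eqP cardT.
by rewrite subset_coefE.
Qed.

Lemma det_gram_ge0 x : (forall i, 0 <= x i) -> 0 <= \det (gram a x).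
Proof.
move=> x_ge0; rewrite cauchy_binet_gram; apply: sumr_ge0 => T /eqP cardT.
by rewrite mulr_ge0 ?det_gramS_ge0 // prodr_ge0.
Qed.

Lemma exp_detE (mu : {set 'I_n} -> R) : exp_det a mu =
  \sum_(T : {set 'I_n} | #|T| == m) prob_contains mu T * \det (gramS a T).
Proof.
rewrite /exp_det.
under eq_bigr => S _ do rewrite -gram_indicator cauchy_binet_gram mulr_sumr.
rewrite exchange_big /=; apply: eq_bigr => T _.
rewrite /prob_contains mulr_suml [RHS]big_mkcond /=; apply: eq_bigr => S _.
by rewrite prod_indicator; case: (T \subset S); rewrite ?mul1r ?mul0r ?mulr0.
Qed.

Lemma pos_correlated_exp_det (alpha : R) x mu : pos_correlated m alpha x mu ->
  alpha ^+ m * \det (gram a x) <= exp_det a mu.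
Proof.
move=> corr; rewrite exp_detE cauchy_binet_gram mulr_sumr.
apply: ler_sum => T /eqP cardT; rewrite mulrA.
by apply: ler_wpM2r; [exact: det_gramS_ge0 | exact: corr].
Qed.

End CauchyBinet.

Section Relaxation.
Variables (R : realType) (n m k : nat) (a : 'I_n -> 'cV[R]_m).

Lemma relax_feasible_indicator (S : {set 'I_n}) : #|S| = k ->
  relax_feasible k a (indicator S) (detroot (gramS a S)).
Proof.
move=> cardS; split; first by rewrite gram_indicator.
split; last by move=> i; rewrite /indicator; case: (i \in S); rewrite ?ler01 ?lexx.
rewrite -cardS -sumr_const [RHS]big_mkcond /=.
by apply: eq_bigr => i _; rewrite /indicator; case: (i \in S).
Qed.

Lemma exists_card_subset : (k <= n)%N -> exists S : {set 'I_n}, #|S| = k.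
Proof.
move=> le_kn; exists [set widen_ord le_kn i | i : 'I_k].
rewrite card_imset ?card_ord // => i j /(congr1 val) /= ij.
exact: val_inj.
Qed.

Lemma wstar_le_relax_optimal x w : (k <= n)%N ->
  relax_optimal k a x w -> wstar k a <= w.
Proof.
move=> le_kn [_ opt]; have bound (S : {set 'I_n}) : #|S| == k -> detroot (gramS a S) <= w.
  by move=> /eqP cardS; exact: opt (relax_feasible_indicator cardS).
have [S0 cardS0] := exists_card_subset le_kn.
apply: (big_ind (fun v => v <= w)) => //.
- by apply: le_trans (bound S0 _); [exact: powR_ge0 | exact/eqP].
- by move=> u v uw vw; rewrite ge_max uw vw.
Qed.

End Relaxation.

Lemma powR_inv_mulXn (R : realType) (p : nat) (c d : R) : (0 < p)%N ->
  0 <= c -> 0 <= d -> powR (c ^+ p * d) p%:R^-1 = c * powR d p%:R^-1.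
Proof.
move=> p_gt0 c_ge0 d_ge0; rewrite powRM ?exprn_ge0 //; congr (_ * _).
by rewrite -powR_mulrn // -powRrM mulfV ?powRr1 // pnatr_eq0 -lt0n.
Qed.

Unset Implicit Arguments.

Theorem lemma1 (R : realType) (n m k : nat) (a : 'I_n -> 'cV[R]_m)
    (xhat : 'I_n -> R) (what : R) (alpha : R) (mu : {set 'I_n} -> R) :
  (0 < m)%N -> (m <= k)%N -> (k <= n)%N ->
  relax_optimal k a xhat what ->
  0 < alpha <= 1 ->
  k_subset_distribution k mu ->
  pos_correlated m alpha xhat mu ->
  alpha * wstar k a <= powR (exp_det a mu) (m%:R^-1).
Proof.
move=> m_gt0 _ le_kn opt /andP[/ltW alpha_ge0 _] _ corr.
have [[w_le_root [_ xhat01]] _] := opt.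
have det_ge0 : 0 <= \det (gram a xhat).
  by apply: det_gram_ge0 => i; case/andP: (xhat01 i).
apply: (@le_trans _ _ (alpha * detroot (gram a xhat))).
  apply: ler_wpM2l => //.
  exact: le_trans (wstar_le_relax_optimal le_kn opt) w_le_root.
have scaled_det_ge0 : 0 <= alpha ^+ m * \det (gram a xhat).
  by rewrite mulr_ge0 ?exprn_ge0.
have exp_det_ge := pos_correlated_exp_det a corr.
rewrite /detroot -powR_inv_mulXn //; apply: ge0_ler_powR; last exact: exp_det_ge.
- by rewrite invr_ge0 ler0n.
- by rewrite nnegrE; exact: scaled_det_ge0.
- by rewrite nnegrE; exact: le_trans scaled_det_ge0 exp_det_ge.
Qed.
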